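(* Let $1 \le k_1, k_2$ be integers. (a) If $m$ is an integer with $k_1 + k_2 - m \le \dim V$, then the Euclidean space $\mathfrak M$ (that is, the family $\mathcal L$ of lines together with the line orthogonality $\perp$ on $\mathcal L$) is definable in the structure $\langle S, \mathcal H_{k_1}, \mathcal H_{k_2}, \perp^{m}_{k_1,k_2}\rangle$. (b) If moreover $k_1,k_2<\dim V$, then the Euclidean space $\mathfrak M$ is definable in the structure $\mathfrak K := \langle S, \mathcal H_{k_1}, \mathcal H_{k_2}, \perp^{\circ}\cap(\mathcal H_{k_1}\times\mathcal H_{k_2})\rangle$.
   Context: Let $V$ be a vector space over a field with a nondegenerate symmetric bilinear form $\xi$ having no isotropic vectors ($\xi(v,v)\neq 0$ for $v\neq 0$). The Euclidean space $\mathfrak M$ has point set $S=V$; its (affine) subspaces are the sets $p+W$ ($p\in V$, $W$ a linear subspace, called the direction), of dimension $\dim W$ (points have dimension $0$). $\mathcal H_k$ is the family of $k$-dimensional subspaces and $\mathcal L=\mathcal H_1$ the family of lines; $\dim\mathfrak M=\dim V$. For lines, $L_1\perp L_2$ iff their directions are $\xi$-orthogonal. For subspaces $X_1,X_2$, $X_1\sqcup X_2$ is the least subspace containing $X_1\cup X_2$. For nonempty subspaces $X,Y$: $X\perp Y$ iff $\xi(b-a,d-c)=0$ for all $a,b\in X$, $c,d\in Y$; and $X\perp_x Y$ iff $X\perp Y$ and $X\cap Y\neq\emptyset$. Define $X_1\perp^{\circ}X_2$ iff there are a point $q\in X_1\cap X_2$ and subspaces $Z_1,Z_2$ with $q\in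 Z_1,Z_2$, $Z_i\perp_x X_1\cap X_2$, $Z_1\perp_x Z_2$, and $(X_1\cap X_2)\sqcup Z_i=X_i$ for $i=1,2$. Define $X_1\perp^{*}X_2$ iff $X_1\perp^{\circ}X_2$ and $X_1\cap X_2\neq X_1$, $X_1\cap X_2\neq X_2$. Write $X_1\perp^{m}_{k_1,k_2}X_2$ iff $X_1\perp^{*}X_2$, $X_1\in\mathcal H_{k_1}$, $X_2\in\mathcal H_{k_2}$ and $X_1\cap X_2\in\mathcal H_m$. ''Definable'' means first-order definable. *)

From mathcomp Require Import all_boot all_algebra.
Set Implicit Arguments. Unset Strict Implicit. Unset Printing Implicit Defensive.
Import GRing.Theory.
Local Open Scope ring_scope.

Section Euclid.
Variables (F : fieldType) (V : lmodType F).

Definition pset := V -> Prop.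

Definition free_fam (k : nat) (v : 'I_k -> V) : Prop :=
  forall c : 'I_k -> F, \sum_(i < k) c i *: v i = 0 -> forall i, c i = 0.

Definition dim_ge (n : nat) : Prop := exists v : 'I_n -> V, free_fam v.

Definition is_Hk (k : nat) (X : pset) : Prop :=
  exists (p : V) (v : 'I_k -> V), free_fam v /\
    forall x, X x <-> exists c : 'I_k -> F, x = p + \sum_(i < k) c i *: v i.

Definition lin_subspace (W : pset) : Prop :=
  W 0 /\ (forall x y, W x -> W y -> W (x + y)) /\ (forall (a : F) x, W x -> W (a *: x)).

Definition subspace (X : pset) : Prop :=
  exists (p : V) (W : pset), lin_subspace W /\
    forall x, X x <-> exists w, W w /\ x = p + w.

Definition inter (X Y : pset) : pset := fun x => X x /\ Y x.
Definition subset (X Y : pset) : Prop := forall x, X x -> Y x.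
Definition seteq (X Y : pset) : Prop := forall x, X x <-> Y x.

Definition is_join (X Y Z : pset) : Prop :=
  subspace Z /\ subset X Z /\ subset Y Z /\
  forall D, subspace D -> subset X D -> subset Y D -> subset Z D.

Variable xi : V -> V -> F.

Definition orth (X Y : pset) : Prop :=
  (exists a, X a) /\ (exists c, Y c) /\
  forall a b c d, X a -> X b -> Y c -> Y d -> xi (b - a) (d - c) = 0.

Definition orth_x (X Y : pset) : Prop := orth X Y /\ exists q, X q /\ Y q.

Definition perp_circ (X1 X2 : pset) : Prop :=
  exists q, inter X1 X2 q /\
  exists Z1 Z2 : pset, subspace Z1 /\ subspace Z2 /\ Z1 q /\ Z2 q /\
    orth_x Z1 (inter X1 X2) /\ orth_x Z2 (inter X1 X2) /\ orth_x Z1 Z2 /\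
    is_join (inter X1 X2) Z1 X1 /\ is_join (inter X1 X2) Z2 X2.

Definition perp_star (X1 X2 : pset) : Prop :=
  perp_circ X1 X2 /\ ~ seteq (inter X1 X2) X1 /\ ~ seteq (inter X1 X2) X2.

Definition perp_m (m k1 k2 : nat) (X1 X2 : pset) : Prop :=
  perp_star X1 X2 /\ is_Hk k1 X1 /\ is_Hk k2 X2 /\ is_Hk m (inter X1 X2).

Definition perp_circ_res (k1 k2 : nat) (X1 X2 : pset) : Prop :=
  perp_circ X1 X2 /\ is_Hk k1 X1 /\ is_Hk k2 X2.

(* The Euclidean space M = <S, L, \perp>, encoded on points:
   collinearity of three points, and orthogonality of the lines ab, cd. *)
Definition collinear (a b c : V) : Prop :=
  exists L, is_Hk 1 L /\ L a /\ L b /\ L c.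

Definition line_perp (a b c d : V) : Prop :=
  a <> b /\ c <> d /\
  exists L1 L2, is_Hk 1 L1 /\ is_Hk 1 L2 /\ L1 a /\ L1 b /\ L2 c /\ L2 d /\
    orth L1 L2.

End Euclid.

(* First-order formulas over the three-sorted structure
   <S, H_A, H_B, R> (points, objects of the first family, objects of the
   second family, incidence point-in-object, and a binary relation R
   between A-objects and B-objects). *)
Inductive form : Type :=
| FEqP of nat & nat
| FEqA of nat & nat
| FEqB of nat & nat
| FInA of nat & nat
| FInB of nat & nat
| FRel of nat & nat
| FNeg of form
| FAnd of form & form
| FExP of nat & form
| FExA of nat & form
| FExB of nat & form.

Definition upd (T : Type) (e : nat -> T) (i : nat) (x : T) : nat -> T :=
  fun n => if n == i then x else e n.

Section Semantics.
Variables (F : fieldType) (V : lmodType F).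
Variables (DA DB : pset V -> Prop) (R : pset V -> pset V -> Prop).

Fixpoint eval (eP : nat -> V) (eA eB : nat -> pset V) (f : form) : Prop :=
  match f with
  | FEqP i j => eP i = eP j
  | FEqA i j => seteq (eA i) (eA j)
  | FEqB i j => seteq (eB i) (eB j)
  | FInA i j => eA j (eP i)
  | FInB i j => eB j (eP i)
  | FRel i j => R (eA i) (eB j)
  | FNeg g => ~ eval eP eA eB g
  | FAnd g h => eval eP eA eB g /\ eval eP eA eB h
  | FExP i g => exists x : V, eval (upd eP i x) eA eB g
  | FExA i g => exists X, DA X /\ eval eP (upd eA i X) eB g
  | FExB i g => exists X, DB X /\ eval eP eA (upd eB i X) g
  end.

Definition definable_M (xi : V -> V -> F) : Prop :=
  exists phiC phiP : form,
  forall (eP : nat -> V) (eA eB : nat -> pset V),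
    (forall i, DA (eA i)) -> (forall i, DB (eB i)) ->
    (eval eP eA eB phiC <-> collinear (eP 0%N) (eP 1%N) (eP 2%N)) /\
    (eval eP eA eB phiP <-> line_perp xi (eP 0%N) (eP 1%N) (eP 2%N) (eP 3%N)).

End Semantics.

From Pilot Require Import Defs.
From mathcomp Require Import all_boot all_algebra.
From Stdlib Require Import Classical.
From mathcomp Require Import zify.
Set Implicit Arguments. Unset Strict Implicit. Unset Printing Implicit Defensive.
Import GRing.Theory.
Local Open Scope ring_scope.

(* Every relation is expressed through incidence and the relation R between
   k1-flats and k2-flats, for any R lying between perp^s_{k1,k2} and perp°,
   where s + (N - k2) = k1 for some N <= dim V.  Points a <> b, c are collinear
   iff c lies on every k1-flat through a and b.  For x, y <> p, the vectors
   x - p and y - p are orthogonal iff some k2-flat X2 through p and y is such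
   that every z <> p of X2 is avoided by a k1-flat X1 through x with R X1 X2.
   Indeed, perp° lets one write x = i + w with i in X1 ∩ X2 and w orthogonal
   to X2, and the separation forces i = p; conversely, in an orthogonal frame
   containing x - p and y - p, coordinate flats provide the separating X1 in
   the configuration perp^s_{k1,k2}.  Orthogonality of lines ab and cd is then
   read off at the foot of the perpendicular from c to ab.  Part (a) takes
   N = k1 + k2 - m and s = m, part (b) takes N = max k1 k2 + 1. *)

Definition FOr f g := FNeg (FAnd (FNeg f) (FNeg g)).
Definition FImp f g := FNeg (FAnd f (FNeg g)).
Definition FAllP i f := FNeg (FExP i (FNeg f)).
Definition FAllA i f := FNeg (FExA i (FNeg f)).

Lemma upd_eq (T : Type) (e : nat -> T) i x : upd e i x i = x.
Proof. by rewrite /upd eqxx. Qed.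

Lemma upd_neq (T : Type) (e : nat -> T) i j x : j != i -> upd e i x j = e j.
Proof. by rewrite /upd => /negbTE ->. Qed.

Section FormulaSemantics.
Variables (F : fieldType) (V : lmodType F).
Variables (DA DB : pset V -> Prop) (R : pset V -> pset V -> Prop).
Implicit Types (eP : nat -> V) (eA eB : nat -> pset V).
Notation ev := (eval DA DB R).

Lemma eval_Or eP eA eB f g : ev eP eA eB (FOr f g) <-> ev eP eA eB f \/ ev eP eA eB g.
Proof.
split=> [h | [hf|hg] [nf ng]] //; apply: NNPP => nfg.
by apply: h; split=> h'; apply: nfg; [left | right].
Qed.

Lemma eval_Imp eP eA eB f g : ev eP eA eB (FImp f g) <-> (ev eP eA eB f -> ev eP eA eB g).
Proof. by split=> [h hf | h [hf]]; [apply: NNPP => hg; apply: h | apply; apply: h]. Qed.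

Lemma eval_AllP eP eA eB i f : ev eP eA eB (FAllP i f) <-> forall x, ev (upd eP i x) eA eB f.
Proof. by split=> [h x | h [x]]; [apply: NNPP => hx; apply: h; exists x | apply; apply: h]. Qed.

Lemma eval_AllA eP eA eB i f :
  ev eP eA eB (FAllA i f) <-> forall X, DA X -> ev eP (upd eA i X) eB f.
Proof.
by split=> [h X DX | h [X [DX]]]; [apply: NNPP => hX; apply: h; exists X | apply; apply: h].
Qed.

(* Formulas about the free points [0..3]; the bound point variables are
   [10] (the foot of a perpendicular) and [11], the bound object variables [0]. *)
Definition col_form a b c :=
  FOr (FEqP a b) (FAllA 0 (FImp (FInA a 0) (FImp (FInA b 0) (FInA c 0)))).

Definition sep_form p x :=
  FAllP 11 (FImp (FInB 11 0) (FImp (FNeg (FEqP 11 p))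
    (FExA 0 (FAnd (FRel 0 0) (FAnd (FInA x 0) (FNeg (FInA 11 0))))))).

Definition ort_form p x y :=
  FOr (FEqP x p) (FOr (FEqP y p) (FExB 0 (FAnd (FInB p 0) (FAnd (FInB y 0) (sep_form p x))))).

Definition right_angles_form f c d e :=
  FAnd (FNeg (FEqP e f)) (FAnd (ort_form f c e) (ort_form f d e)).

Definition collinear_form := col_form 0 1 2.

Definition line_perp_form :=
  FAnd (FNeg (FEqP 0 1)) (FAnd (FNeg (FEqP 2 3)) (FExP 10 (FAnd (col_form 0 1 10)
    (FOr (right_angles_form 10 2 3 0) (right_angles_form 10 2 3 1))))).

Lemma eval_col_form eP eA eB a b c : ev eP eA eB (col_form a b c) <->
  eP a = eP b \/ forall X, DA X -> X (eP a) -> X (eP b) -> X (eP c).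
Proof.
rewrite eval_Or eval_AllA; split; case=> [|h]; [by left | right | by left | right] => X DX.
  by move: (h X DX); rewrite !eval_Imp /= !upd_eq.
by rewrite !eval_Imp /= !upd_eq; apply: h.
Qed.

Lemma eval_line_perp_form eP eA eB : ev eP eA eB line_perp_form <->
  [/\ eP 0%N <> eP 1%N, eP 2%N <> eP 3%N & exists f,
    ev (upd eP 10 f) eA eB (col_form 0 1 10) /\
    ev (upd eP 10 f) eA eB (FOr (right_angles_form 10 2 3 0) (right_angles_form 10 2 3 1))].
Proof. by split=> [[? [? ?]] | [? ? ?]]. Qed.

Lemma eval_sep_form eP eA eB p x : p != 11%N -> x != 11%N ->
  ev eP eA eB (sep_form p x) <-> forall z, eB 0%N z -> z <> eP p ->
    exists X1, [/\ DA X1, R X1 (eB 0%N), X1 (eP x) & ~ X1 z].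
Proof.
move=> p11 x11; rewrite eval_AllP; split=> sep z; move: (sep z);
  rewrite !eval_Imp /= !upd_eq (upd_neq _ _ p11).
  move=> sepz ez zp; case: (sepz ez zp) => X1.
  by rewrite !upd_eq (upd_neq _ _ x11) => -[DX1 [R1 [X1x X1z]]]; exists X1.
move=> sepz ez zp; have [X1 [DX1 R1 X1x X1z]] := sepz ez zp.
by exists X1; rewrite !upd_eq (upd_neq _ _ x11).
Qed.

Lemma eval_ort_form eP eA eB p x y : p != 11%N -> x != 11%N ->
  ev eP eA eB (ort_form p x y) <-> eP x = eP p \/ eP y = eP p \/
  exists X2, [/\ DB X2, X2 (eP p), X2 (eP y) & forall z, X2 z -> z <> eP p ->
    exists X1, [/\ DA X1, R X1 X2, X1 (eP x) & ~ X1 z]].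
Proof.
move=> p11 x11; rewrite !eval_Or; do 2 apply: or_iff_compat_l; split.
  case=> X2 [DX2 [X2p [X2y /eval_sep_form sep]]].
  by exists X2; move: X2p X2y sep; rewrite /= !upd_eq => X2p X2y /(_ p11 x11).
case=> X2 [DX2 X2p X2y sep]; exists X2; split=> //; rewrite /= !upd_eq.
by do 2!split=> //; apply/eval_sep_form; rewrite ?upd_eq.
Qed.

End FormulaSemantics.

Lemma addrKB (U : zmodType) (x y z : U) : (x + y) - (x + z) = y - z.
Proof. by rewrite [x + y]addrC addrKA. Qed.

Lemma exists_subset_card (T : finType) (A : {set T}) s : (s <= #|A|)%N ->
  exists2 S : {set T}, S \subset A & #|S| = s.
Proof.
elim: s => [|s IH] sA; first by exists set0; rewrite ?sub0set ?cards0.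
have [S SA cS] := IH (ltnW sA).
have /subsetPn [x xA xS] : ~~ (A \subset S).
  by apply/negP => /subset_leq_card; rewrite cS leqNgt sA.
by exists (x |: S); rewrite ?subUset ?sub1set ?xA ?SA // cardsU1 xS cS.
Qed.

Lemma exists_separating_set N (i0 i1 : 'I_N) k : i0 != i1 -> (1 <= k < N)%N ->
  exists B : {set 'I_N}, [/\ i0 \in B, i1 \notin B & #|B| = k].
Proof.
move=> i01 /andP[k1 kN].
have c2 : #|~: [set i0; i1]| = (N - 2)%N.
  by have := cardsC [set i0; i1]; rewrite cards2 i01 card_ord; lia.
have [S SC cS] := exists_subset_card (s := k.-1) (A := ~: [set i0; i1]) ltac:(lia).
have [Si0 Si1] : i0 \notin S /\ i1 \notin S.
  by split; apply/negP => /(subsetP SC); rewrite !inE eqxx ?orbT.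
exists (i0 |: S); rewrite !inE eqxx negb_or eq_sym i01 Si1 cardsU1 Si0 cS.
by split=> //; lia.
Qed.

Section Euclidean.
Variables (F : fieldType) (V : lmodType F) (xi : V -> V -> F).
Hypothesis xi_sym : forall u v, xi u v = xi v u.
Hypothesis xi_lin : forall (a : F) u v w, xi (a *: u + v) w = a * xi u w + xi v w.
Hypothesis xi_aniso : forall u, u <> 0 -> xi u u <> 0.

Lemma xiDl u v w : xi (u + v) w = xi u w + xi v w.
Proof. by rewrite -[u in LHS]scale1r xi_lin mul1r. Qed.

Lemma xi0l w : xi 0 w = 0.
Proof. by apply: (addrI (xi 0 w)); rewrite -xiDl !addr0. Qed.

Lemma xiZl a u w : xi (a *: u) w = a * xi u w.
Proof. by rewrite -[a *: u]addr0 xi_lin xi0l addr0. Qed.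

Lemma xiNl u w : xi (- u) w = - xi u w.
Proof. by rewrite -scaleN1r xiZl mulN1r. Qed.

Lemma xiBl u v w : xi (u - v) w = xi u w - xi v w.
Proof. by rewrite xiDl xiNl. Qed.

Lemma xiDr u v w : xi w (u + v) = xi w u + xi w v.
Proof. by rewrite xi_sym xiDl !(xi_sym w). Qed.

Lemma xi0r w : xi w 0 = 0.
Proof. by rewrite xi_sym xi0l. Qed.

Lemma xiZr a u w : xi w (a *: u) = a * xi w u.
Proof. by rewrite xi_sym xiZl xi_sym. Qed.

Lemma xi_suml (I : Type) (r : seq I) (P : pred I) (f : I -> V) w :
  xi (\sum_(i <- r | P i) f i) w = \sum_(i <- r | P i) xi (f i) w.
Proof. exact: (big_morph (xi^~ w) (fun x y => xiDl x y w) (xi0l w)). Qed.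

Lemma xi_self_neq0 u : u != 0 -> xi u u != 0.
Proof. by move=> /eqP /xi_aniso /eqP. Qed.

Lemma xiZr_eq0 (w u : V) s : s != 0 -> xi w (s *: u) = 0 -> xi w u = 0.
Proof. by move=> snz /eqP; rewrite xiZr mulf_eq0 (negbTE snz) => /eqP. Qed.

Lemma span_not_free n j (e : 'I_n -> V) (s : 'I_j -> V) (M : 'M[F]_(n, j)) :
  (j < n)%N -> (forall i, e i = \sum_k M i k *: s k) -> ~ free_fam e.
Proof.
move=> ltjn eE free_e.
have : kermx M != 0.
  apply/eqP => K0; have := mxrank_ker M; rewrite K0 mxrank0.
  have := rank_leq_col M; lia.
case/matrix0Pn => i0 [k0 nz].
suff /free_e /(_ k0) /eqP : \sum_i kermx M i0 i *: e i = 0 by rewrite (negbTE nz).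
rewrite (eq_bigr (fun i => \sum_k (kermx M i0 i * M i k) *: s k)); last first.
  by move=> i _; rewrite eE scaler_sumr; apply: eq_bigr => k _; rewrite scalerA.
rewrite exchange_big /= big1 // => k _.
rewrite -scaler_suml.
have -> : \sum_i kermx M i0 i * M i k = (kermx M *m M) i0 k by rewrite mxE.
by rewrite mulmx_ker mxE scale0r.
Qed.

Definition orth_seq (s : seq V) :=
  (forall i, (i < size s)%N -> s`_i != 0) /\
  (forall i j, (i < size s)%N -> (j < size s)%N -> i != j -> xi s`_i s`_j = 0).

Lemma orth_seq_complement N s : dim_ge V N -> orth_seq s -> (size s < N)%N ->
  exists2 w, w != 0 & forall k, (k < size s)%N -> xi w s`_k = 0.
Proof.
case=> e free_e [snz sor] lt; apply: NNPP => noW.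
set j := size s in lt snz sor noW.
pose c i (k : 'I_j) := xi (e i) s`_k / xi s`_k s`_k.
(* Otherwise every [e i] equals its orthogonal projection on the span of [s]. *)
suff eE i : e i = \sum_k (\matrix_(i0, k0) c i0 k0) i k *: (fun k : 'I_j => s`_k) k.
  exact: span_not_free lt eE free_e.
rewrite (eq_bigr (fun k : 'I_j => c i k *: s`_k)) => [|k _]; last by rewrite mxE.
apply/eqP; rewrite -subr_eq0; apply/eqP; apply: NNPP => nz; apply: noW.
exists (e i - \sum_(k < j) c i k *: s`_k); first exact/eqP.
move=> l lj.
rewrite xiBl xi_suml (bigD1 (Ordinal lj)) //= big1 => [|k /eqP nk].
  by rewrite addr0 xiZl /c divfK ?subrr ?xi_self_neq0 ?snz.
by rewrite xiZl sor ?mulr0 //; apply/eqP => kl; apply: nk; apply: val_inj.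
Qed.

Lemma orth_seq_extend N s : dim_ge V N -> orth_seq s -> (size s <= N)%N ->
  exists t, [/\ orth_seq t, size t = N & forall i, (i < size s)%N -> t`_i = s`_i].
Proof.
move=> dimN; move: {2}(N - size s)%N (erefl (N - size s)%N) => d.
elim: d s => [|d IH] s dE os le; first by exists s; split => //; lia.
have [w wnz wo] := orth_seq_complement dimN os ltac:(lia).
have os' : orth_seq (rcons s w).
  case: os => snz sor; split.
    move=> i; rewrite size_rcons ltnS nth_rcons.
    by case: ltngtP => // /snz.
  move=> i k; rewrite size_rcons !ltnS !nth_rcons.
  case: (ltngtP i (size s)) => hi; case: (ltngtP k (size s)) => hk //.
  - by move=> _ _; apply: sor.
  - by move=> _ _ _; rewrite xi_sym; apply: wo.
  - by move=> _ _ _; apply: wo.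
  - by move=> _ _ /eqP; lia.
have [t [ot st pt]] := IH (rcons s w) ltac:(rewrite size_rcons; lia) os'
  ltac:(rewrite size_rcons; lia).
exists t; split=> // i hi.
by rewrite pt ?size_rcons ?nth_rcons ?hi // ltnS ltnW.
Qed.

Lemma dim_ge_nonzero N : dim_ge V N -> (0 < N)%N -> exists w : V, w != 0.
Proof.
move=> dimN N0.
have [t [[tnz _] st _]] := orth_seq_extend (s := [::]) dimN (ltac:(by split)) (leq0n N).
by exists t`_0; apply: tnz; rewrite st.
Qed.

Lemma orth_free_fam k (h : 'I_k -> V) : (forall i, h i != 0) ->
  (forall i j, i != j -> xi (h i) (h j) = 0) -> free_fam h.
Proof.
move=> hnz hor c /(f_equal (xi^~ (h _))) /= cE j; move: (cE j).
rewrite xi0l xi_suml (bigD1 j) //= big1 ?addr0 => [|i nij]; last by rewrite xiZl hor ?mulr0.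
by rewrite xiZl => /eqP; rewrite mulf_eq0 (negbTE (xi_self_neq0 (hnz j))) orbF => /eqP.
Qed.

Lemma orth_frame2 N u v : dim_ge V N -> (2 <= N)%N -> u != 0 -> v != 0 -> xi u v = 0 ->
  exists (g : 'I_N -> V) (i0 i1 : 'I_N), [/\ forall i, g i != 0,
    forall i j, i != j -> xi (g i) (g j) = 0, i0 != i1, g i0 = u & g i1 = v].
Proof.
move=> dimN N2 unz vnz uv.
have os : orth_seq [:: u; v].
  split; first by case=> [|[|i]].
  by case=> [|[|i]] [|[|j]] //= _ _ _; rewrite xi_sym.
have [t [[tnz tor] st pt]] := orth_seq_extend dimN os N2.
exists (fun i : 'I_N => t`_i), (Ordinal (ltnW N2)), (Ordinal N2).
split=> //; [by move=> i; apply: tnz; rewrite st | | exact: (pt 0%N) | exact: (pt 1%N)].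
by move=> i j nij; apply: tor; rewrite ?st //; apply: contra nij => /eqP/val_inj ->.
Qed.

Lemma lin_subspaceD (W : pset V) a b : lin_subspace W -> W a -> W b -> W (a + b).
Proof. by case=> _ [WD _]; apply: WD. Qed.

Lemma lin_subspaceZ (W : pset V) c a : lin_subspace W -> W a -> W (c *: a).
Proof. by case=> _ [_ WZ]; apply: WZ. Qed.

Lemma lin_subspaceB (W : pset V) a b : lin_subspace W -> W a -> W b -> W (a - b).
Proof. by move=> lW Wa Wb; rewrite -scaleN1r; apply: lin_subspaceD (lin_subspaceZ _ _ _). Qed.

Lemma subspace_affine_comb (D : pset V) a b c : subspace D -> D a -> D b -> D c ->
  D (a + b - c).
Proof.
case=> p [W [lW HD]] /HD [wa [Wa ->]] /HD [wb [Wb ->]] /HD [wc [Wc ->]].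
apply/HD; exists (wa + (wb - wc)); split.
  exact: lin_subspaceD Wa (lin_subspaceB lW Wb Wc).
by rewrite opprD addrACA -addrA -[p + wb - wc]addrA addKr -addrA.
Qed.

Lemma subspace_line (D : pset V) a b t : subspace D -> D a -> D b -> D (a + t *: (b - a)).
Proof.
case=> p [W [lW HD]] /HD [wa [Wa ->]] /HD [wb [Wb ->]].
apply/HD; exists (wa + t *: (wb - wa)); split.
  exact: lin_subspaceD Wa (lin_subspaceZ _ lW (lin_subspaceB lW Wb Wa)).
by rewrite opprD addrACA subrr add0r -addrA.
Qed.

Lemma subspace_rebase (X : pset V) q : subspace X -> X q ->
  exists2 W, lin_subspace W & forall x, X x <-> exists w, W w /\ x = q + w.
Proof.
case=> p0 [W [lW HX]] /HX [w0 [Ww0 ->]].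
exists W => // x; rewrite HX; split.
  case=> w [Ww ->]; exists (w - w0); split; first exact: lin_subspaceB.
  by rewrite addrACA subrr addr0.
case=> w [Ww ->]; exists (w0 + w); split; last by rewrite addrA.
exact: lin_subspaceD.
Qed.

Lemma subspace_inter (X Y : pset V) q : subspace X -> subspace Y -> X q -> Y q ->
  subspace (inter X Y).
Proof.
move=> sX sY Xq Yq.
have [W1 [W10 [W1D W1Z]] H1] := subspace_rebase sX Xq.
have [W2 [W20 [W2D W2Z]] H2] := subspace_rebase sY Yq.
exists q, (fun w => W1 w /\ W2 w); split.
  split=> //; split; first by move=> a b [? ?] [? ?]; split; [apply: W1D | apply: W2D].
  by move=> a w [? ?]; split; [apply: W1Z | apply: W2Z].
move=> x; split.
  case=> /H1 [w1 [Ww1 ->]] /H2 [w2 [Ww2 /addrI w12]].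
  by exists w1; do !split => //; rewrite w12.
by case=> w [[Ww1 Ww2] ->]; split; [apply/H1 | apply/H2]; exists w.
Qed.

(* Minimality of the join: [X] lies in the subspace of the [i + z - q]. *)
Lemma join_decomp (I Z X : pset V) q : is_join I Z X -> subspace I -> subspace Z ->
  I q -> Z q -> forall x, X x -> exists i z, [/\ I i, Z z & x = i + z - q].
Proof.
case=> _ [_ [_ least]] sI sZ Iq Zq.
have [WI [WI0 [WID WIZ]] HI] := subspace_rebase sI Iq.
have [WZ [WZ0 [WZD WZZ]] HZ] := subspace_rebase sZ Zq.
have sumE a b : q + a + (q + b) - q = q + (a + b).
  by rewrite -addrA [q + b - q]addrC addKr -addrA.
apply: least.
- exists q, (fun w => exists a b, [/\ WI a, WZ b & w = a + b]); split.
    split; first by exists 0, 0; rewrite addr0.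
    split.
      move=> x y [a [b [Wa Wb ->]]] [a' [b' [Wa' Wb' ->]]].
      by exists (a + a'), (b + b'); rewrite addrACA; split; [apply: WID | apply: WZD |].
    move=> c x [a [b [Wa Wb ->]]]; exists (c *: a), (c *: b).
    by rewrite scalerDr; split; [apply: WIZ | apply: WZZ |].
  move=> x; split.
    case=> i [z [/HI [a [Wa ->]] /HZ [b [Wb ->]] ->]].
    by exists (a + b); rewrite sumE; split=> //; exists a, b.
  case=> w [[a [b [Wa Wb ->]]] ->]; exists (q + a), (q + b).
  by rewrite sumE; split=> //; [apply/HI; exists a | apply/HZ; exists b].
- by move=> x Ix; exists x, q; rewrite addrK.
- by move=> x Zx; exists q, x; rewrite addrC addKr.
Qed.

Lemma span_subspace (I : finType) (P : pred I) (p : V) (v : I -> V) :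
  subspace (fun x => exists c : I -> F, x = p + \sum_(i | P i) c i *: v i).
Proof.
exists p, (fun w => exists c : I -> F, w = \sum_(i | P i) c i *: v i); split.
  split; first by exists (fun _ => 0); rewrite big1 // => i _; rewrite scale0r.
  split.
    move=> x y [c ->] [d ->]; exists (fun i => c i + d i); rewrite -big_split /=.
    by apply: eq_bigr => i _; rewrite scalerDl.
  move=> a x [c ->]; exists (fun i => a * c i); rewrite scaler_sumr.
  by apply: eq_bigr => i _; rewrite scalerA.
move=> x; split; last by case=> w [[c ->] ->]; exists c.
by case=> c ->; exists (\sum_(i | P i) c i *: v i); split=> //; exists c.
Qed.

Lemma Hk_subspace k (X : pset V) : is_Hk k X -> subspace X.
Proof.
case=> p [v [_ HX]]; have [q [W [lW HS]]] := span_subspace predT p v.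
by exists q, W; split=> // x; rewrite HX HS.
Qed.

Lemma Hk_seteq k (X Y : pset V) : is_Hk k X -> seteq X Y -> is_Hk k Y.
Proof. by case=> p [v [fv HX]] XY; exists p, v; split => // x; rewrite -XY. Qed.

Lemma orth_subr (X Y Y' : pset V) : orth xi X Y -> Defs.subset Y' Y -> (exists y, Y' y) ->
  orth xi X Y'.
Proof.
case=> hX [_ H] sY nY; split=> //; split=> // a b c d Xa Xb /sY Yc /sY Yd.
exact: H.
Qed.

Section Flats.
Variables (N : nat) (g : 'I_N -> V).
Hypothesis gnz : forall i, g i != 0.
Hypothesis gor : forall i j, i != j -> xi (g i) (g j) = 0.
Implicit Types (A B : {set 'I_N}) (p x : V).

Definition flat p A : pset V :=
  fun x => exists c : 'I_N -> F, x = p + \sum_(i in A) c i *: g i.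

Lemma xi_sum_frame A c j :
  xi (\sum_(i in A) c i *: g i) (g j) = if j \in A then c j * xi (g j) (g j) else 0.
Proof.
rewrite xi_suml; case: ifP => jA.
  rewrite (bigD1 j) //= big1 ?addr0 ?xiZl // => i /andP[_ nij].
  by rewrite xiZl gor ?mulr0.
by rewrite big1 // => i iA; rewrite xiZl gor ?mulr0 //; apply: contraFneq jA => <-.
Qed.

Lemma flat_base p A : flat p A p.
Proof. by exists (fun _ => 0); rewrite big1 ?addr0 // => i _; rewrite scale0r. Qed.

Lemma flat_frame p A j a : j \in A -> flat p A (p + a *: g j).
Proof.
move=> jA; exists (fun i => if i == j then a else 0); congr (_ + _).
by rewrite (bigD1 j) //= eqxx big1 ?addr0 // => i /andP[_ /negbTE ->]; rewrite scale0r.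
Qed.

Lemma flat_orth_notin p A x j : flat p A x -> j \notin A -> xi (x - p) (g j) = 0.
Proof. by case=> c ->; rewrite addrC addKr xi_sum_frame => /negbTE ->. Qed.

Lemma flat_coord p A x : flat p A x ->
  x - p = \sum_(i in A) (xi (x - p) (g i) / xi (g i) (g i)) *: g i.
Proof.
case=> c ->; rewrite addrC addKr; apply: eq_bigr => i iA.
by rewrite xi_sum_frame iA mulfK // xi_self_neq0.
Qed.

Lemma flat_subset p A B : A \subset B -> Defs.subset (flat p A) (flat p B).
Proof.
move=> sAB x [c ->]; exists (fun i => if i \in A then c i else 0); congr (_ + _).
rewrite (big_setID (A:=B) A) /= (setIidPr sAB) [X in _ + X]big1 ?addr0.
  by apply: eq_bigr => i ->.
by move=> i; rewrite inE => /andP[/negbTE -> _]; rewrite scale0r.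
Qed.

Lemma flat_interI p A B : Defs.subset (inter (flat p A) (flat p B)) (flat p (A :&: B)).
Proof.
move=> x [xA xB]; exists (fun i => xi (x - p) (g i) / xi (g i) (g i)).
have := flat_coord xA; rewrite (big_setID (A:=A) B) /= [X in _ = _ + X]big1 ?addr0.
  by move=> <-; rewrite addrC subrK.
by move=> i; rewrite inE => /andP[iB _]; rewrite (flat_orth_notin xB iB) mul0r scale0r.
Qed.

Lemma flat_subspace p A : subspace (flat p A).
Proof. exact: span_subspace. Qed.

Lemma flat_Hk p A : is_Hk #|A| (flat p A).
Proof.
exists p, (fun k => g (enum_val k)); split.
  apply: orth_free_fam => [k|k k' nkk]; first exact: gnz.
  by apply: gor; apply: contra nkk => /eqP /enum_val_inj ->.
move=> x; split; first by case=> c ->; exists (fun k => c (enum_val k)); rewrite big_enum_val.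
case=> c ->.
have [A0|/card_gt0P [x0 x0A]] := posnP #|A|.
  exists (fun _ => 0); rewrite [X in _ = _ + X]big1 => [|i _]; last by rewrite scale0r.
  by rewrite big1 // => k; have := ltn_ord k; rewrite {2}A0.
exists (fun i => c (enum_rank_in x0A i)); congr (_ + _); rewrite [RHS]big_enum_val /=.
by apply: eq_bigr => k _; rewrite enum_valK_in.
Qed.

Lemma flat_neq_base p A z : flat p A z -> z <> p ->
  exists2 j, j \in A & xi (z - p) (g j) != 0.
Proof.
move=> Az zp; apply: NNPP => noj; apply: zp; apply/eqP; rewrite -subr_eq0.
rewrite (flat_coord Az) big1 // => i iA.
have [-> | nz] := eqVneq (xi (z - p) (g i)) 0; first by rewrite mul0r scale0r.
by case: noj; exists i.
Qed.

Lemma flat_interS p A B : Defs.subset (flat p (A :&: B)) (inter (flat p A) (flat p B)).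
Proof. by move=> x xI; split; apply: flat_subset xI; rewrite ?subsetIl ?subsetIr. Qed.

Lemma flat_inter_Hk p A B : is_Hk #|A :&: B| (inter (flat p A) (flat p B)).
Proof.
apply: Hk_seteq (flat_Hk p (A :&: B)) _ => x.
by split; [apply: flat_interS | apply: flat_interI].
Qed.

Lemma flat_diff p A a b : flat p A a -> flat p A b ->
  exists e, b - a = \sum_(i in A) e i *: g i.
Proof.
case=> ca -> [cb ->]; exists (fun i => cb i - ca i).
by rewrite addrKB -sumrB; apply: eq_bigr => i _; rewrite scalerBl.
Qed.

Lemma orth_flat_disjoint p A B : [disjoint A & B] -> orth xi (flat p A) (flat p B).
Proof.
move=> dAB; split; first by exists p; apply: flat_base.
split=> [|a b c d Aa Ab Bc Bd]; first by exists p; apply: flat_base.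
have [[e ->] [f ->]] := (flat_diff Aa Ab, flat_diff Bc Bd).
rewrite xi_suml big1 // => i iA; rewrite xiZl xi_sym xi_sum_frame.
by rewrite (disjointFr dAB iA) mulr0.
Qed.

Lemma flat_join p (I : pset V) A B : Defs.subset I (flat p A) ->
  Defs.subset (flat p (A :&: B)) I -> is_join I (flat p (A :\: B)) (flat p A).
Proof.
move=> IA ABI; split; first exact: flat_subspace.
split=> //; split; first by apply: flat_subset; apply: subsetDl.
move=> D sD ID BD x [c ->].
have -> : p + \sum_(i in A) c i *: g i =
    (p + \sum_(i in A :&: B) c i *: g i) + (p + \sum_(i in A :\: B) c i *: g i) - p.
  rewrite (big_setID (A:=A) B) /=.
  by rewrite [p + \sum_(i in A :\: B) _]addrC !addrA addrK.
apply: subspace_affine_comb; rewrite //; last by apply/ID/ABI/flat_base.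
- by apply/ID/ABI; exists c.
- by apply: BD; exists c.
Qed.

Lemma flat_perp_circ p A1 A2 : perp_circ xi (flat p A1) (flat p A2).
Proof.
set I := inter (flat p A1) (flat p A2).
have Ip : I p by split; apply: flat_base.
have disjD A B : [disjoint A :\: B & B] by case/subsetDP: (subxx (A :\: B)).
have orthD A B : Defs.subset I (flat p B) -> orth_x xi (flat p (A :\: B)) I.
  move=> IB; split; last by exists p; split=> //; apply: flat_base.
  by apply: orth_subr IB _; [apply: orth_flat_disjoint | exists p].
exists p; split=> //; exists (flat p (A1 :\: A2)), (flat p (A2 :\: A1)).
split; first exact: flat_subspace. split; first exact: flat_subspace.
split; first exact: flat_base. split; first exact: flat_base.
split; first by apply: orthD => x [].
split; first by apply: orthD => x [].
split.
  split; last by exists p; split; apply: flat_base.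
  exact/orth_flat_disjoint/(disjointWr (subsetDl A2 A1)).
split; apply: flat_join; try by move=> x [].
  exact: flat_interS.
by rewrite setIC; apply: flat_interS.
Qed.
End Flats.

Lemma perp_circ_decomp (X1 X2 : pset V) x : perp_circ xi X1 X2 -> X1 x ->
  exists i y, [/\ inter X1 X2 i, x = i + y &
    forall c d, X2 c -> X2 d -> xi y (d - c) = 0].
Proof.
case=> q [Iq [Z1 [Z2 [sZ1 [sZ2 [Z1q [Z2q [oZ1I [oZ2I [oZ12 [j1 j2]]]]]]]]]]] X1x.
have sI : subspace (inter X1 X2).
  by apply: (subspace_inter (q := q)); [case: j1 | case: j2 | case: Iq | case: Iq].
have [i [z [Ii Zz ->]]] := join_decomp j1 sI sZ1 Iq Z1q X1x.
exists i, (z - q); split=> //; first by rewrite addrA.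
move=> c d /(join_decomp j2 sI sZ2 Iq Z2q) [ic [zc [Iic Zzc ->]]]
           /(join_decomp j2 sI sZ2 Iq Z2q) [id [zd [Iid Zzd ->]]].
have -> : id + zd - q - (ic + zc - q) = (id - ic) + (zd - zc).
  by rewrite opprB addrA addrNK opprD addrACA.
case: oZ1I => [[_ [_ oZ1I]] _]; case: oZ12 => [[_ [_ oZ12]] _].
by rewrite xiDr oZ1I // oZ12 // addr0.
Qed.

(* Soundness of the orthogonality formula: decompose [x] along an [X1]
   avoiding the foot [i] of [x] on [X2]; uniqueness of that foot forces
   [i = p]. *)
Lemma separated_orth (X2 : pset V) p x y : X2 p -> X2 y -> y <> p ->
  (forall z, X2 z -> z <> p -> exists X1, [/\ perp_circ xi X1 X2, X1 x & ~ X1 z]) ->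
  xi (x - p) (y - p) = 0.
Proof.
move=> X2p X2y yp sep.
have [X1 [pc X1x _]] := sep y X2y yp.
have [i [w [[_ X2i] xE ow]]] := perp_circ_decomp pc X1x.
have [ip | ip] := eqVneq i p; first by rewrite xE ip [p + w]addrC addrK ow.
have [X1' [pc' X1'x nX1'i]] := sep i X2i (elimN eqP ip).
have [i' [w' [[X1'i' X2i'] xE' ow']]] := perp_circ_decomp pc' X1'x.
suff ii' : i = i' by case: nX1'i; rewrite ii'.
apply/eqP; rewrite -subr_eq0; apply/eqP; apply: NNPP => /xi_aniso; apply.
have iE : i - i' = w' - w by apply/eqP; rewrite subr_eq addrAC [w' + i']addrC -xE' xE addrK.
by rewrite {1}iE xiBl ow' // ow // subrr.
Qed.

Definition line (a w : V) : pset V := fun x => exists t : F, x = a + t *: w.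

Lemma line_Hk a w : w != 0 -> is_Hk 1 (line a w).
Proof.
move=> wnz; exists a, (fun _ => w); split.
  move=> c; rewrite big_ord1 => /eqP; rewrite scaler_eq0 (negbTE wnz) orbF => /eqP c0 i.
  by rewrite (ord1 i).
by move=> x; split=> [[t ->] | [c ->]]; [exists (fun _ => t) | exists (c ord0)]; rewrite big_ord1.
Qed.

Lemma line_base a w : line a w a.
Proof. by exists 0; rewrite scale0r addr0. Qed.

Lemma line_through a b : line a (b - a) b.
Proof. by exists 1; rewrite scale1r addrC subrK. Qed.

Lemma Hk1_param (L : pset V) a b c : is_Hk 1 L -> L a -> L b -> L c -> a <> b ->
  exists t, c = a + t *: (b - a).
Proof.
case=> p [v [_ HL]] /HL [ca ->] /HL [cb ->] /HL [cc ->] ab.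
rewrite !big_ord1 in ab *.
have nz : cb ord0 - ca ord0 != 0 by rewrite subr_eq0; apply: contra_not_neq ab => ->.
exists ((cc ord0 - ca ord0) / (cb ord0 - ca ord0)).
rewrite addrKB -scalerBl scalerA divfK // -addrA -scalerDl.
by rewrite [ca ord0 + _]addrC subrK.
Qed.

Lemma collinear_aac N (a c : V) : dim_ge V N -> (0 < N)%N -> collinear a a c.
Proof.
move=> dimN N0; have [-> | ca] := eqVneq c a.
  have [w wnz] := dim_ge_nonzero dimN N0.
  by exists (line a w); split; [apply: line_Hk | do !split; apply: line_base].
exists (line a (c - a)); split; first by apply: line_Hk; rewrite subr_eq0.
by split; [|split]; [apply: line_base | apply: line_base | apply: line_through].
Qed.

Lemma xi_orth_proj u v : u != 0 -> xi (v - (xi v u / xi u u) *: u) u = 0.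
Proof. by move=> unz; rewrite xiBl xiZl divfK ?subrr ?xi_self_neq0. Qed.

Lemma collinear_flatsP N k (a b c : V) : dim_ge V N -> (1 <= k < N)%N ->
  collinear a b c <-> a = b \/ forall X, is_Hk k X -> X a -> X b -> X c.
Proof.
move=> dimN kN; split.
  case=> L [HL [La [Lb Lc]]]; have [-> | ab] := eqVneq a b; first by left.
  right=> X HX Xa Xb; have [t ->] := Hk1_param HL La Lb Lc (elimN eqP ab).
  exact: subspace_line (Hk_subspace HX) Xa Xb.
have N0 : (0 < N)%N by lia.
have [<- _ | ab] := eqVneq a b; first exact: collinear_aac dimN N0.
case=> [/eqP | onflats]; first by rewrite (negbTE ab).
set u := b - a; have unz : u != 0 by rewrite subr_eq0 eq_sym.
set t := xi (c - a) u / xi u u; set w := c - a - t *: u.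
have [w0 | wnz] := eqVneq w 0.
  exists (line a u); split; first exact: line_Hk.
  split; [exact: line_base | split; [exact: line_through | exists t]].
  by apply/eqP; rewrite -subr_eq0 opprD addrA -/w w0.
exfalso; have uw : xi u w = 0 by rewrite xi_sym xi_orth_proj.
have [g [i0 [i1 [gnz gor i01 g0 g1]]]] := orth_frame2 dimN ltac:(lia) unz wnz uw.
have [B [Bi0 Bi1 cB]] := exists_separating_set i01 kN.
have /onflats : is_Hk k (flat g a B) by rewrite -cB; apply: flat_Hk.
have Xb : flat g a B b by have := flat_frame g a 1 Bi0; rewrite g0 scale1r [a + u]addrC subrK.
move=> /(_ (flat_base g a B) Xb) /(flat_orth_notin gor) /(_ Bi1) /eqP.
have -> : c - a = t *: u + w by rewrite [RHS]addrC subrK.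
by rewrite g1 xiDl xiZl uw mulr0 add0r (negbTE (xi_self_neq0 wnz)).
Qed.

(* In an orthogonal frame with
   [g i0 = y - p] and [g i1 = x - p], take [X2] spanned by [B2 ∋ i0] and,
   for [z] in [X2] with a nonzero coordinate [j0], take [X1] spanned by the
   complement of [B2] together with [s] further vectors of [B2] avoiding [j0]. *)
Lemma orth_separated N k1 k2 s (p x y : V) : dim_ge V N -> (1 <= k2 < N)%N ->
  (s < k2)%N -> (s + (N - k2))%N = k1 ->
  x != p -> y != p -> xi (x - p) (y - p) = 0 ->
  exists X2, [/\ is_Hk k2 X2, X2 p, X2 y & forall z, X2 z -> z <> p ->
    exists X1, [/\ perp_m xi s k1 k2 X1 X2, X1 x & ~ X1 z]].
Proof.
move=> dimN k2N sk2 k1E xp yp xy.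
have [unz vnz] : x - p != 0 /\ y - p != 0 by rewrite !subr_eq0.
have [g [i0 [i1 [gnz gor i01 g0 g1]]]] :=
  orth_frame2 dimN ltac:(lia) vnz unz ltac:(by rewrite xi_sym).
have [B2 [B2i0 B2i1 cB2]] := exists_separating_set i01 k2N.
have pE (q : V) : q = p + 1 *: (q - p) by rewrite scale1r addrC subrK.
have X2x : ~ flat g p B2 x.
  move=> /(flat_orth_notin gor) /(_ B2i1) /eqP; rewrite -g1.
  exact/negP/xi_self_neq0.
exists (flat g p B2); split; first by rewrite -cB2; apply: flat_Hk.
- exact: flat_base.
- by rewrite (pE y) -g0; apply: flat_frame.
move=> z X2z zp; have [j0 j0B2 zj0] := flat_neq_base gnz gor X2z zp.
have [S SB cS] := exists_subset_card (A := B2 :\ j0) (s := s)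
  ltac:(by rewrite (cardsD1 j0 B2) j0B2 in cB2; lia).
have SB2 : S \subset B2 := subset_trans SB (subD1set B2 j0).
set A1 := S :|: ~: B2.
have A1B2 : A1 :&: B2 = S by rewrite setIUl [~: B2 :&: _]setIC setICr setU0; apply/setIidPl.
have cA1 : #|A1| = k1.
  rewrite cardsU (_ : S :&: ~: B2 = set0).
    by rewrite cards0 subn0 cS; have := cardsC B2; rewrite card_ord cB2; lia.
  by apply/disjoint_setI0; rewrite disjoints_subset setCK.
have j0S : j0 \notin S by apply/negP => /(subsetP SB); rewrite !inE eqxx.
have j0A1 : j0 \notin A1 by rewrite !inE negb_or j0S j0B2.
have X1z : ~ flat g p A1 z.
  by move=> /(flat_orth_notin gor) /(_ j0A1) zE; rewrite zE eqxx in zj0.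
have X1x : flat g p A1 x.
  by rewrite (pE x) -g1; apply: flat_frame; rewrite !inE B2i1 orbT.
exists (flat g p A1); split=> //; split.
  split; first exact: flat_perp_circ.
  by split=> [/(_ x) [_ /(_ X1x) []] | /(_ z) [_ /(_ X2z) []]].
split; first by rewrite -cA1; apply: flat_Hk.
split; first by rewrite -cB2; apply: flat_Hk.
by rewrite -cS -A1B2; apply: flat_inter_Hk.
Qed.

Lemma line_perp_iff (a b c d : V) :
  line_perp xi a b c d <-> [/\ a <> b, c <> d & xi (b - a) (d - c) = 0].
Proof.
split=> [[ab [cd [L1 [L2 [_ [_ [L1a [L1b [L2c [L2d [_ [_ o]]]]]]]]]]]] | [ab cd o]].
  by split=> //; apply: o.
have [unz vnz] : b - a != 0 /\ d - c != 0.
  by rewrite !subr_eq0; split; apply/eqP; [apply: nesym | apply: nesym].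
have lineB (q w : V) s t : q + s *: w - (q + t *: w) = (s - t) *: w.
  by rewrite addrKB scalerBl.
do 2 split=> //; exists (line a (b - a)), (line c (d - c)).
do 6 (split; first by apply: line_Hk || apply: line_base || apply: line_through).
split; first by exists a; apply: line_base.
split; first by exists c; apply: line_base.
by move=> a' b' c' d' [s1 ->] [s2 ->] [t1 ->] [t2 ->]; rewrite !lineB xiZl xiZr o !mulr0.
Qed.

Definition right_angles (f c d e : V) :=
  [/\ e <> f, xi (c - f) (e - f) = 0 & xi (d - f) (e - f) = 0].

(* [f] is the foot of the perpendicular from [c] to [ab]; the disjunction picks
   a point of [ab] other than [f] to give the direction of [ab]. *)
Lemma line_perp_foot (a b c d : V) : a <> b ->
  (exists f, collinear a b f /\ (right_angles f c d a \/ right_angles f c d b)) <->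
  xi (b - a) (d - c) = 0.
Proof.
move=> ab; set u := b - a; have unz : u != 0 by rewrite subr_eq0; apply/eqP/nesym.
have aE t : a - (a + t *: u) = (- t) *: u by rewrite -{1}[a]addr0 addrKB sub0r scaleNr.
have bE t : b - (a + t *: u) = (1 - t) *: u by rewrite opprD addrA scalerBl scale1r.
have dfE f : d - f = (d - c) + (c - f) by rewrite addrA subrK.
split.
  have orth_e f e s : e - f = s *: u -> s != 0 -> right_angles f c d e -> xi u (d - c) = 0.
    move=> eE s0 [_]; rewrite eE => cf df; rewrite xi_sym [d - c](_ : _ = (d - f) - (c - f)).
      by rewrite xiBl (xiZr_eq0 s0 cf) (xiZr_eq0 s0 df) subrr.
    by rewrite opprB addrA subrK.
  case=> f [[L [HL [La [Lb Lf]]]] fe]; have [t fE] := Hk1_param HL La Lb Lf ab.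
  case: fe => fe; [apply: (orth_e f a (- t)) | apply: (orth_e f b (1 - t))] => //.
  - by rewrite fE aE.
  - by rewrite oppr_eq0; apply/eqP => t0; case: fe => [[]]; rewrite fE t0 scale0r addr0.
  - by rewrite fE bE.
  - by rewrite subr_eq0; apply/eqP => t1; case: fe => [[]]; rewrite fE -t1 scale1r subrKC.
move=> o; set t := xi (c - a) u / xi u u; set f := a + t *: u.
have cf : xi (c - f) u = 0 by rewrite opprD addrA xi_orth_proj.
have df : xi (d - f) u = 0 by rewrite dfE xiDl cf addr0 xi_sym.
have rt e s : e - f = s *: u -> e <> f -> right_angles f c d e.
  by move=> eE ef; split; rewrite // eE xiZr ?cf ?df mulr0.
exists f; split.
  exists (line a u); split; first exact: line_Hk.
  by split; [exact: line_base | split; [exact: line_through | exists t]].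
have [fa | fa] := eqVneq f a; [right; apply: (rt b (1 - t)) | left; apply: (rt a (- t))].
- exact: bE.
- by rewrite fa; apply: nesym.
- exact: aE.
- exact/nesym/eqP.
Qed.

Section Definability.
Variables (k1 k2 N s : nat) (R : pset V -> pset V -> Prop).
Hypotheses (dimN : dim_ge V N) (k2N : (1 <= k2 < N)%N) (sk2 : (s < k2)%N)
  (k1E : (s + (N - k2))%N = k1).
Hypothesis R_perp_circ : forall X1 X2, R X1 X2 -> perp_circ xi X1 X2.
Hypothesis perp_m_R : forall X1 X2, perp_m xi s k1 k2 X1 X2 -> R X1 X2.
Notation ev := (eval (is_Hk k1) (is_Hk k2) R).

Lemma eval_ort eP eA eB p x y : p != 11%N -> x != 11%N ->
  ev eP eA eB (ort_form p x y) <-> xi (eP x - eP p) (eP y - eP p) = 0.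
Proof.
move=> p11 x11; rewrite eval_ort_form //; split.
  case=> [-> | [-> | [X2 [_ X2p X2y sep]]]]; rewrite ?subrr ?xi0l ?xi0r //.
  have [-> | yp] := eqVneq (eP y) (eP p); first by rewrite subrr xi0r.
  apply: (separated_orth X2p X2y (elimN eqP yp)) => z X2z zp.
  by have [X1 [_ R12 X1x X1z]] := sep z X2z zp; exists X1; split=> //; apply: R_perp_circ.
have [-> _ | xp] := eqVneq (eP x) (eP p); first by left.
have [-> _ | yp o] := eqVneq (eP y) (eP p); first by right; left.
have [X2 [HX2 X2p X2y sep]] := orth_separated dimN k2N sk2 k1E xp yp o.
right; right; exists X2; split=> // z X2z zp.
have [X1 [pm X1x X1z]] := sep z X2z zp.
by exists X1; split=> //; [case: pm => _ [] | apply: perp_m_R].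
Qed.

Lemma eval_right_angles_form eP eA eB f c d e : f != 11%N -> c != 11%N -> d != 11%N ->
  ev eP eA eB (right_angles_form f c d e) <-> right_angles (eP f) (eP c) (eP d) (eP e).
Proof.
move=> f11 c11 d11.
split=> [[ef [/eval_ort ce /eval_ort de]] | [ef ce de]]; first by split; [|apply: ce|apply: de].
by split=> //; split; apply/eval_ort.
Qed.

Lemma definable_M_of_perp_m : definable_M (is_Hk k1) (is_Hk k2) R xi.
Proof.
have k1N : (1 <= k1 < N)%N by lia.
exists collinear_form, line_perp_form => eP eA eB _ _; split.
  by rewrite eval_col_form; symmetry; apply: collinear_flatsP dimN k1N.
rewrite line_perp_iff eval_line_perp_form; split.
  case=> n01 n23 [f [/eval_col_form Cf /eval_Or RA]]; split=> //.
  apply/(line_perp_foot _ _ n01); exists f; split.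
    by apply/(collinear_flatsP _ _ _ dimN k1N); move: Cf; rewrite /upd.
  by move: RA; rewrite !eval_right_angles_form.
case=> n01 n23 /(line_perp_foot _ _ n01) [f [Cf RA]]; split=> //; exists f; split.
  by apply/eval_col_form; apply/(collinear_flatsP _ _ _ dimN k1N).
by apply/eval_Or; rewrite !eval_right_angles_form.
Qed.

End Definability.
End Euclidean.

Theorem theorem2p4 (F : fieldType) (V : lmodType F) (xi : V -> V -> F)
  (k1 k2 : nat)
  (xi_sym : forall u v, xi u v = xi v u)
  (xi_lin : forall (a : F) u v w, xi (a *: u + v) w = a * xi u w + xi v w)
  (xi_nondeg : forall u, (forall w, xi u w = 0) -> u = 0)
  (xi_aniso : forall u, u <> 0 -> xi u u <> 0)
  (hk1 : (1 <= k1)%N) (hk2 : (1 <= k2)%N) :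
  (forall m : nat, (m < k1)%N -> (m < k2)%N -> dim_ge V (k1 + k2 - m)%N ->
     definable_M (is_Hk (V:=V) k1) (is_Hk (V:=V) k2) (perp_m xi m k1 k2) xi)
  /\
  (dim_ge V k1.+1 -> dim_ge V k2.+1 ->
     definable_M (is_Hk (V:=V) k1) (is_Hk (V:=V) k2) (perp_circ_res xi k1 k2) xi).
Proof.
split=> [m mk1 mk2 dimV | dimV1 dimV2].
  apply: (definable_M_of_perp_m xi_sym xi_lin xi_aniso dimV (s := m)); try lia.
  - by move=> X1 X2 [[]].
  - by [].
have dimV : dim_ge V (maxn k1 k2).+1 by case: leqP.
apply: (definable_M_of_perp_m xi_sym xi_lin xi_aniso dimV
  (s := (k1 + k2 - (maxn k1 k2).+1)%N)); try lia.
- by move=> X1 X2 [].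
- by move=> X1 X2 [[pc _] [H1 [H2 _]]]; split.
Qed.
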